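(* Let $d,T\ge 1$, let $0<b<c$, and let $x_1,\dots,x_T\in\mathbb{R}^d$, $y_1,\dots,y_T\in\mathbb{R}$ satisfy $\|x_t\|^2\le X^2$ and $|y_t|\le Y$ for all $t$, for some $X>0$, $Y\ge 0$. Let $\hat y_t$ be the LASER predictions and $D_t$ the LASER matrices (defined in the context), and write $L_T(\mathrm{LASER})=\sum_{t=1}^T(y_t-\hat y_t)^2$. Then for every sequence $u_1,\dots,u_T\in\mathbb{R}^d$, with $V=\sum_{t=1}^{T-1}\|u_t-u_{t+1}\|^2$ and $L_T(\{u_t\})=\sum_{t=1}^T (x_t^\top u_t-y_t)^2$, \[ L_T(\mathrm{LASER}) \le b\|u_1\|^2 + L_T(\{u_t\}) + Y^2\ln\Big|\tfrac{1}{b}D_T\Big| + c^{-1}Y^2\,\mathrm{Tr}(D_0) + cV + c^{-1}Y^2Td\,\max\Big\{\tfrac{3X^2+\sqrt{X^4+4X^2c}}{2},\; b+X^2\Big\}. \] Furthermore, suppose $b=\varepsilon c$ for some $0<\varepsilon<1$, and let $\mu=\max\big\{\tfrac{9}{8}X^2,\ \tfrac{(b+X^2)^2}{8X^2}\big\}$. If $V>0$, $V\le T\,\frac{\sqrt2\,Y^2dX}{\mu^{3/2}}$, and $c=\big(\sqrt2\,TY^2dX/V\big)^{2/3}$, then \[ L_T(\mathrm{LASER}) \le b\|u_1\|^2 + 3\big(\sqrt2\,Y^2dX\big)^{2/3}T^{2/3}V^{1/3} + \frac{\varepsilon}{1-\varepsilon}Y^2d + L_T(\{u_t\}) + Y^2\ln\Big|\tfrac1b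 D_T\Big|. \]
   Context: LASER algorithm: with parameters $0<b<c$, set $D_0=\frac{bc}{c-b}I\in\mathbb{R}^{d\times d}$ and $e_0=0\in\mathbb{R}^d$. For $t=1,\dots,T$: compute $D_t=\big(D_{t-1}^{-1}+c^{-1}I\big)^{-1}+x_tx_t^\top$; predict $\hat y_t = x_t^\top D_t^{-1}\big(I+c^{-1}D_{t-1}\big)^{-1}e_{t-1}$; then set $e_t=\big(I+c^{-1}D_{t-1}\big)^{-1}e_{t-1}+y_tx_t$. $|A|$ denotes the determinant of a matrix $A$, $\mathrm{Tr}$ the trace, $I$ the $d\times d$ identity. *)

From HB Require Import structures.
From mathcomp Require Import all_boot all_order all_algebra.
From mathcomp Require Import all_classical all_reals all_analysis.
Set Implicit Arguments. Unset Strict Implicit. Unset Printing Implicit Defensive.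
Import Order.TTheory GRing.Theory Num.Theory.
Local Open Scope ring_scope.

Section Laser.
Variables (R : realType) (d : nat) (b c : R).
Variables (x : nat -> 'cV[R]_d) (y : nat -> R).

Definition sqnorm2 (v : 'cV[R]_d) : R := \sum_(i < d) (v i 0) ^+ 2.

Definition D0 : 'M[R]_d := (b * c / (c - b))%:M.

Definition shrink (D : 'M[R]_d) : 'M[R]_d := invmx (1%:M + c^-1 *: D).

(* laser_state t = (D_t, e_t); inputs indexed x_1..x_T, y_1..y_T *)
Fixpoint laser_state (t : nat) : 'M[R]_d * 'cV[R]_d :=
  match t with
  | 0 => (D0, 0)
  | t'.+1 =>
      let (Dp, ep) := laser_state t' in
      (invmx (invmx Dp + c^-1%:M) + x t'.+1 *m (x t'.+1)^T,
       shrink Dp *m ep + y t'.+1 *: x t'.+1)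
  end.

Definition laserD (t : nat) : 'M[R]_d := (laser_state t).1.
Definition lasere (t : nat) : 'cV[R]_d := (laser_state t).2.

(* prediction at time t >= 1 *)
Definition laser_pred (t : nat) : R :=
  ((x t)^T *m invmx (laserD t) *m shrink (laserD t.-1) *m lasere t.-1) 0 0.

Definition laser_loss (T : nat) : R :=
  \sum_(1 <= t < T.+1) (y t - laser_pred t) ^+ 2.

End Laser.

Definition seq_loss (R : realType) (d : nat) (x u : nat -> 'cV[R]_d)
  (y : nat -> R) (T : nat) : R :=
  \sum_(1 <= t < T.+1) (((x t)^T *m u t) 0 0 - y t) ^+ 2.

Definition path_variation (R : realType) (d : nat) (u : nat -> 'cV[R]_d) (T : nat) : R :=
  \sum_(1 <= t < T) sqnorm2 (u t - u t.+1).

From HB Require Import structures.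
From mathcomp Require Import all_boot all_order all_algebra.
From mathcomp Require Import all_classical all_reals all_analysis.
From mathcomp Require Import ring lra.
Set Implicit Arguments. Unset Strict Implicit. Unset Printing Implicit Defensive.
Import Order.TTheory GRing.Theory Num.Theory.
Local Open Scope ring_scope.

(* Write [F(D) = (D^-1 + c^-1 I)^-1], so that LASER maintains
   [D_t = F(D_(t-1)) + x_t x_t']. The least regularised loss
   [b|u_1|^2 + sum (y_s - x_s'u_s)^2 + c sum |u_s - u_(s+1)|^2] of a comparator
   path ending at [w] is bounded by a quadratic in [w] with Hessian [D_t]: the
   quadratic form of [F(D)] is the infimal convolution of that of [D] with
   [c |.|^2], and adding [(y_t - x_t'w)^2] is a rank-one update. Completing the
   square shows that the LASER loss at time [t] is at most the increase of the
   minimum of this quadratic plus [y_t^2 x_t' D_t^-1 x_t]. These last terms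
   telescope through [ln det], each forgetting step costing [c^-1 tr D_t] by
   Hadamard's inequality, and the spectrum of [D_t] stays below the fixed point
   of [M |-> cM/(M+c) + X^2]. The second bound is the first one evaluated at the
   tuned [c]. *)

Section DotProduct.
Context {R : realDomainType} {n : nat}.
Implicit Types (u v w : 'cV[R]_n) (A : 'M[R]_n).

Definition dot u v : R := \sum_i u i 0 * v i 0.
Definition symmx A := A^T = A.
Definition posdefmx A := forall v, v != 0 -> 0 < dot v (A *m v).

Lemma dotC u v : dot u v = dot v u.
Proof. by apply: eq_bigr => i _; rewrite mulrC. Qed.

Lemma dotDl u v w : dot (u + v) w = dot u w + dot v w.
Proof. by rewrite /dot -big_split; apply: eq_bigr => i _; rewrite !mxE mulrDl. Qed.

Lemma dotDr u v w : dot w (u + v) = dot w u + dot w v.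
Proof. by rewrite dotC dotDl !(dotC w). Qed.

Lemma dotZl a u w : dot (a *: u) w = a * dot u w.
Proof. by rewrite /dot mulr_sumr; apply: eq_bigr => i _; rewrite !mxE mulrA. Qed.

Lemma dotZr a u w : dot w (a *: u) = a * dot w u.
Proof. by rewrite dotC dotZl dotC. Qed.

Lemma dotNl u w : dot (- u) w = - dot u w.
Proof. by rewrite -scaleN1r dotZl mulN1r. Qed.

Lemma dotNr u w : dot w (- u) = - dot w u.
Proof. by rewrite dotC dotNl dotC. Qed.

Lemma dotBl u v w : dot (u - v) w = dot u w - dot v w.
Proof. by rewrite dotDl dotNl. Qed.

Lemma dotBr u v w : dot w (u - v) = dot w u - dot w v.
Proof. by rewrite dotDr dotNr. Qed.

Lemma dot0r u : dot u 0 = 0.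
Proof. by rewrite /dot big1 // => i _; rewrite mxE mulr0. Qed.

Lemma dot0l u : dot 0 u = 0.
Proof. by rewrite dotC dot0r. Qed.

Lemma dot_ge0 u : 0 <= dot u u.
Proof. by apply: sumr_ge0 => i _; rewrite -expr2 sqr_ge0. Qed.

Lemma dot_gt0 u : u != 0 -> 0 < dot u u.
Proof.
move=> u_neq0; rewrite lt_def dot_ge0 andbT; apply: contra u_neq0 => /eqP.
move=> /psumr_eq0P u0; apply/eqP/matrixP => i j; rewrite (ord1 j) mxE.
by apply/eqP; rewrite -sqrf_eq0 expr2 u0 // => k _; rewrite -expr2 sqr_ge0.
Qed.

Lemma dot_trmx_mul u v : (u^T *m v) 0 0 = dot u v.
Proof. by rewrite mxE; apply: eq_bigr => i _; rewrite mxE. Qed.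

Lemma dot_mulmxr A u v : dot u (A *m v) = dot (A^T *m u) v.
Proof. by rewrite -!dot_trmx_mul trmx_mul trmxK mulmxA. Qed.

Lemma dot_symmx A u v : symmx A -> dot (A *m u) v = dot u (A *m v).
Proof. by move=> sA; rewrite dot_mulmxr sA. Qed.

Lemma mul_rank1mx a v : (a *m a^T) *m v = dot a v *: a.
Proof.
rewrite -mulmxA -dot_trmx_mul; apply/matrixP => i j; rewrite (ord1 j).
by rewrite mxE big_ord1 [RHS]mxE mulrC.
Qed.

Lemma posdefmx_ge0 A : posdefmx A -> forall v, 0 <= dot v (A *m v).
Proof.
move=> pA v; have [->|v_neq0] := eqVneq v 0; first by rewrite dot0l.
exact: ltW (pA _ v_neq0).
Qed.

Lemma dot_delta i v : dot (delta_mx i 0) v = v i 0.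
Proof.
rewrite /dot (bigD1 i) //= big1 ?addr0; first by rewrite mxE !eqxx mul1r.
by move=> j /negbTE ji; rewrite mxE ji mul0r.
Qed.

Lemma posdefmx_diag_ge0 A i : posdefmx A -> 0 <= A i i.
Proof.
by move=> pA; have := posdefmx_ge0 pA (delta_mx i 0); rewrite -colE dot_delta mxE.
Qed.

Lemma cauchy_schwarz a v : dot a v ^+ 2 <= dot a a * dot v v.
Proof.
have [->|a_neq0] := eqVneq a 0; first by rewrite !dot0l expr0n /= mul0r.
have aa_gt0 := dot_gt0 a_neq0.
have : 0 <= dot a a * (dot a a * dot v v - dot a v ^+ 2).
  have := dot_ge0 (dot a a *: v - dot a v *: a).
  rewrite !(dotBl, dotBr, dotZl, dotZr) (dotC v a) => H.
  by apply: (le_trans H); rewrite le_eqVlt; apply/orP; left; apply/eqP; ring.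
by rewrite pmulr_rge0 // subr_ge0.
Qed.

Lemma mxtrace_le A M : (forall v, dot v (A *m v) <= M * dot v v) ->
  \tr A <= M * n%:R.
Proof.
move=> AM; rewrite /mxtrace -[n in n%:R]card_ord -sumr_const mulr_sumr.
apply: ler_sum => i _; have := AM (delta_mx i 0).
by rewrite -colE !dot_delta !mxE !eqxx mulr1.
Qed.

End DotProduct.

Section MatrixScaling.
Variable R : comPzRingType.

Lemma mulmxZl m p q (a : R) (A : 'M[R]_(m, p)) (B : 'M[R]_(p, q)) :
  (a *: A) *m B = a *: (A *m B).
Proof. by rewrite scalemxAl. Qed.

Lemma mulmxZr m p q (a : R) (A : 'M[R]_(m, p)) (B : 'M[R]_(p, q)) :
  A *m (a *: B) = a *: (A *m B).
Proof. by rewrite scalemxAr. Qed.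

End MatrixScaling.

Ltac dot_expand := rewrite ?(mulmxDl, mulmxDr, mulmxBl, mulmxBr, mulmxN, mulNmx,
  mulmxZl, mulmxZr, mul_scalar_mx, mul_mx_scalar, mul1mx, mulmx1,
  dotDl, dotDr, dotBl, dotBr, dotNl, dotNr, dotZl, dotZr).

Section PositiveDefinite.
Variable R : realFieldType.

Lemma dot_col_mx n1 n2 (a1 b1 : 'cV[R]_n1) (a2 b2 : 'cV[R]_n2) :
  dot (col_mx a1 a2) (col_mx b1 b2) = dot a1 b1 + dot a2 b2.
Proof.
rewrite /dot big_split_ord /=; congr (_ + _); apply: eq_bigr => i _.
  by rewrite !col_mxEu.
by rewrite !col_mxEd.
Qed.

Lemma dot1mx (w : 'cV[R]_1) : dot 1%:M w = w 0 0.
Proof. by rewrite /dot big_ord1 mxE mul1r. Qed.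

Lemma det_block_mx_schur n (a : 'M[R]_1) (r : 'rV[R]_n) (l : 'cV[R]_n)
    (C : 'M[R]_n) : C \in unitmx ->
  \det (block_mx a r l C) = \det C * (a 0 0 - (r *m invmx C *m l) 0 0).
Proof.
move=> uC; set s := a 0 0 - _.
have -> : block_mx a r l C =
    block_mx 1%:M (r *m invmx C) 0 1%:M *m block_mx s%:M 0 l C.
  rewrite mulmx_block !mul1mx !mulmx0 !mul0mx !add0r ?addr0 mulmxKV //.
  congr block_mx; apply/matrixP => i j; rewrite !ord1 [RHS]mxE [s%:M _ _]mxE /=.
  by rewrite mulr1n /s subrK.
rewrite (@det_mulmx _ (1 + n)) det_ublock det_lblock det_scalar1.
by rewrite !det_scalar !expr1n !mul1r ?mulr1 mulrC.
Qed.

Lemma det_block_mx1 n (r : 'rV[R]_n) (l : 'cV[R]_n) (C : 'M[R]_n) :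
  \det (block_mx 1%:M r l C) = \det (C - l *m r).
Proof.
have -> : block_mx 1%:M r l C =
    block_mx 1%:M 0 l 1%:M *m block_mx 1%:M r 0 (C - l *m r).
  by rewrite mulmx_block !mul1mx !mulmx0 !mul0mx ?add0r ?addr0 mulmx1 addrC subrK.
by rewrite det_mulmx det_ublock det_lblock !det_scalar !expr1n !mul1r.
Qed.

(* Induction on the dimension through the Schur complement of the top-left entry. *)
Lemma hadamard n (N : 'M[R]_n) : symmx N -> posdefmx N ->
  0 < \det N /\ \det N <= \prod_i N i i.
Proof.
elim: n N => [|n IH] N sN pN; first by rewrite det_mx00 big_ord0 ltr01 lexx.
have NE := @submxK R 1 n 1 n N.
set a := ulsubmx _ in NE; set r := ursubmx _ in NE.
set l := dlsubmx _ in NE; set C := drsubmx _ in NE.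
have : (block_mx a r l C)^T = block_mx a r l C by rewrite NE sN.
rewrite tr_block_mx => /eq_block_mx[_ lE _ sC].
have pC : posdefmx C.
  move=> v v_neq0.
  have : @col_mx _ 1 n 1 0 v != 0 by rewrite col_mx_eq0 eqxx v_neq0.
  move=> /pN; rewrite -NE (mul_block_col a r l C) !mulmx0 !add0r.
  by rewrite (@dot_col_mx 1 n 0) dot0l add0r.
have [detC_gt0 detC_le] := IH C sC pC.
have uC : C \in unitmx by rewrite unitmxE unitfE gt_eqF.
set k := invmx C *m l.
have Ck : C *m k = l by rewrite mulKVmx.
have rCl : (r *m invmx C *m l) 0 0 = dot l k by rewrite -mulmxA -lE dot_trmx_mul.
have lk_ge0 : 0 <= dot l k by rewrite -Ck dot_symmx // posdefmx_ge0.
have schur_gt0 : 0 < a 0 0 - dot l k.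
  have : @col_mx _ 1 n 1 1%:M (- k) != 0.
    rewrite col_mx_eq0 negb_and; apply/orP; left; apply/eqP => /matrixP /(_ 0 0).
    by rewrite !mxE /= => /eqP; rewrite oner_eq0.
  move=> /pN; rewrite -NE (mul_block_col a r l C) (@dot_col_mx 1 n 1%:M).
  rewrite !mulmx1 !mulmxN Ck subrr dot0r addr0 dot1mx -dot_trmx_mul.
  by rewrite lE !mxE.
rewrite -NE det_block_mx_schur // rCl; split; first exact: mulr_gt0.
rewrite (@big_split_ord _ _ _ 1 n) /= big_ord1 mulrC (block_mxEul a r l C).
under eq_bigr => i _ do rewrite (block_mxEdr a r l C).
by apply: ler_pM => //; [exact: ltW | exact: ltW | lra].
Qed.

Lemma det_posdefmx_gt0 n (N : 'M[R]_n) : symmx N -> posdefmx N -> 0 < \det N.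
Proof. by move=> sN pN; case: (hadamard sN pN). Qed.

Lemma posdefmx_unit n (A : 'M[R]_n) : symmx A -> posdefmx A -> A \in unitmx.
Proof. by move=> sA pA; rewrite unitmxE unitfE gt_eqF // det_posdefmx_gt0. Qed.

Lemma symmx_inv n (A : 'M[R]_n) : symmx A -> symmx (invmx A).
Proof. by move=> sA; rewrite /symmx trmx_inv sA. Qed.

Lemma invmx_posdefmx_ge0 n (A : 'M[R]_n) v : symmx A -> posdefmx A ->
  0 <= dot v (invmx A *m v).
Proof.
move=> sA pA; set k := invmx A *m v.
have -> : v = A *m k by rewrite /k mulKVmx // posdefmx_unit.
by rewrite dotC posdefmx_ge0.
Qed.

Lemma dot_invmx_ge n (P : 'M[R]_n) v w : symmx P -> posdefmx P ->
  2 * dot w v - dot w (P *m w) <= dot v (invmx P *m v).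
Proof.
move=> sP pP; set k := invmx P *m v.
have vE : v = P *m k by rewrite mulKVmx // posdefmx_unit.
have := posdefmx_ge0 pP (w - k); rewrite vE; dot_expand.
rewrite -(dot_symmx k w sP) (dotC (P *m k) w) (dotC (P *m k) k); lra.
Qed.

Lemma det_rank1_update n (A : 'M[R]_n) (a : 'cV[R]_n) :
  (A + a *m a^T) \in unitmx ->
  \det A = \det (A + a *m a^T) * (1 - dot a (invmx (A + a *m a^T) *m a)).
Proof.
move=> uAa; have := det_block_mx_schur 1%:M a^T a uAa.
by rewrite det_block_mx1 addrK => ->; rewrite mxE -dot_trmx_mul mulmxA.
Qed.

End PositiveDefinite.

Section RankOneUpdate.
Variables (R : realFieldType) (n : nat) (A : 'M[R]_n) (a : 'cV[R]_n).
Hypotheses (sA : symmx A) (sAa : symmx (A + a *m a^T)) (uAa : (A + a *m a^T) \in unitmx).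

Let B := invmx (A + a *m a^T).
Let sB : symmx B. Proof. exact: symmx_inv. Qed.

(* Completing the square in [w] for the quadratic [(w - m)' A (w - m) + (z - a'w)^2]. *)
Lemma rank1_update_quad (m e w : 'cV[R]_n) (z : R) : e = A *m m + z *: a ->
  dot (w - B *m e) ((A + a *m a^T) *m (w - B *m e)) - dot e (B *m e) =
  dot (w - m) (A *m (w - m)) - dot m (A *m m) + (z - dot a w) ^+ 2 - z ^+ 2.
Proof.
move=> eE; have BeE : (A + a *m a^T) *m (B *m e) = e by rewrite /B mulKVmx.
rewrite mulmxBr BeE !dotBl !dotBr -(dot_symmx (B *m e) w sAa) BeE (dotC (B *m e) e).
rewrite (dotC e w) mulmxDl mul_rank1mx dotDr dotZr eE; dot_expand.
by rewrite -(dot_symmx m w sA) !(dotC (A *m m) w) !(dotC w a); ring.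
Qed.

Lemma rank1_update_pred (m e : 'cV[R]_n) (z : R) : posdefmx A ->
  e = A *m m + z *: a ->
  (z - dot a (B *m (A *m m))) ^+ 2 <=
    dot m (A *m m) + z ^+ 2 - dot e (B *m e) + z ^+ 2 * dot a (B *m a).
Proof.
move=> pA eE; set g := A *m m; set k := B *m g.
have gE : g = A *m k + dot a k *: a.
  by rewrite -mul_rank1mx -mulmxDl /k /B mulKVmx.
have := posdefmx_ge0 pA (m - k); dot_expand.
have gk : dot k (A *m m) = dot k (A *m k) + dot a k ^+ 2.
  by rewrite -/g {1}gE dotDr dotZr (dotC k a) expr2.
have mk : dot m (A *m k) = dot k (A *m m) by rewrite -(dot_symmx m k sA) dotC.
have eBe : dot e (B *m e) = dot k (A *m k) + dot a k ^+ 2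
    + 2 * z * dot a k + z ^+ 2 * dot a (B *m a).
  rewrite eE -/g; dot_expand; rewrite -/k (dotC g k) {1}gE dotDr dotZr (dotC k a).
  by rewrite -(dot_symmx g a sB) -/k (dotC k a); ring.
rewrite eBe mk gk -/g -/k; nra.
Qed.

End RankOneUpdate.

Section ForgettingMap.
Variables (R : realFieldType) (n : nat) (c : R) (D : 'M[R]_n).
Hypotheses (c_gt0 : 0 < c) (sD : symmx D) (pD : posdefmx D).

(* The map [F] of the header, in a closed form that needs no inverse of [D]
   ([invmx_inv_addc]). *)
Definition forgetmx : 'M[R]_n := c *: 1%:M - c ^+ 2 *: invmx (D + c%:M).

Let K := D + c%:M.

Let sK : symmx K.
Proof. by rewrite /symmx /K linearD /= sD tr_scalar_mx. Qed.

Let pK : posdefmx K.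
Proof.
move=> v v_neq0; rewrite /K; dot_expand.
by apply: addr_gt0; [exact: pD | exact: mulr_gt0 (dot_gt0 _)].
Qed.

Let uK : K \in unitmx. Proof. exact: posdefmx_unit. Qed.

Let KE (k : 'cV[R]_n) : K *m k = D *m k + c *: k.
Proof. by rewrite /K mulmxDl mul_scalar_mx. Qed.

Let invK_mulD : invmx K *m D = 1%:M - c *: invmx K.
Proof. by rewrite -(mulVmx uK) /K mulmxDr mul_mx_scalar addrK. Qed.

Let forgetmxE : forgetmx = c *: (invmx K *m D).
Proof. by rewrite invK_mulD /forgetmx scalerBr scalerA -expr2. Qed.

Let forgetmxK (k : 'cV[R]_n) : forgetmx *m (K *m k) = c *: (K *m k) - c ^+ 2 *: k.
Proof. by rewrite /forgetmx mulmxBl !mulmxZl mul1mx mulmxA mulVmx // mul1mx. Qed.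

Let forgetmx_quad (k : 'cV[R]_n) : dot (K *m k) (forgetmx *m (K *m k)) =
  c * dot (D *m k) (D *m k) + c ^+ 2 * dot k (D *m k).
Proof. by rewrite forgetmxK KE; dot_expand; rewrite (dotC (D *m k) k); ring. Qed.

Lemma invmx_inv_addc : invmx (invmx D + c^-1%:M) = forgetmx.
Proof.
have uD := posdefmx_unit sD pD.
have FDc : forgetmx *m (invmx D + c^-1%:M) = 1%:M.
  rewrite forgetmxE mulmxDr !mulmxZl -mulmxA mulmxV // mulmx1 mul_mx_scalar.
  by rewrite scalerA mulrC mulVf ?gt_eqF // scale1r invK_mulD addrC subrK.
have [_ uDc] := mulmx1_unit FDc.
by rewrite -[RHS]mulmx1 -(mulmxV uDc) mulmxA FDc mul1mx.
Qed.

Let shrinkE : 1%:M + c^-1 *: D = c^-1 *: K.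
Proof. by rewrite /K scalerDr scale_scalar_mx mulVf ?gt_eqF // addrC. Qed.

Lemma shrink_forgetmx : invmx (1%:M + c^-1 *: D) = forgetmx *m invmx D.
Proof.
rewrite shrinkE invmxZ ?invrK; last by rewrite unitmxZ // unitfE invr_eq0 gt_eqF.
by rewrite forgetmxE mulmxZl -mulmxA mulmxV ?mulmx1 // posdefmx_unit.
Qed.

Lemma mul_shrink_forgetmx : (1%:M + c^-1 *: D) *m forgetmx = D.
Proof.
rewrite shrinkE forgetmxE mulmxZl mulmxZr scalerA mulVf ?gt_eqF // scale1r.
by rewrite mulmxA mulmxV // mul1mx.
Qed.

Lemma forgetmx_sym : symmx forgetmx.
Proof.
rewrite /symmx /forgetmx linearB /= !linearZ /= tr_scalar_mx.
by rewrite (symmx_inv sK).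
Qed.

Lemma forgetmx_posdef : posdefmx forgetmx.
Proof.
move=> v v_neq0; set k := invmx K *m v.
have vE : v = K *m k by rewrite mulKVmx.
have k_neq0 : k != 0 by apply: contra v_neq0 => /eqP k0; rewrite vE k0 mulmx0.
rewrite vE forgetmx_quad; apply: ltr_pwDr; first exact: mulr_gt0 (exprn_gt0 _ _) (pD _).
exact: mulr_ge0 (ltW _) (dot_ge0 _).
Qed.

(* The quadratic form of [forgetmx] is the infimal convolution of that of [D]
   with [c] times the squared norm. *)
Lemma forgetmx_infconv (p q : 'cV[R]_n) :
  dot q (forgetmx *m q) <= dot p (D *m p) + c * dot (p - q) (p - q).
Proof.
set k := invmx K *m q; have -> : q = K *m k by rewrite mulKVmx.
rewrite forgetmx_quad -subr_ge0.
have := posdefmx_ge0 pK (p - c *: k); rewrite !KE; dot_expand.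
rewrite -(dot_symmx k p sD) !(dotC (D *m k) p) !(dotC k p) (dotC (D *m k) k).
by move=> H; apply: (le_trans H); rewrite le_eqVlt; apply/orP; left; apply/eqP; ring.
Qed.

Lemma forgetmx_le (M : R) : 0 < M -> (forall v, dot v (D *m v) <= M * dot v v) ->
  forall v, dot v (forgetmx *m v) <= c * M / (M + c) * dot v v.
Proof.
move=> M_gt0 DM v; set s := (M + c)^-1.
have s_gt0 : 0 < s by rewrite invr_gt0 addr_gt0.
have Mc_neq0 : M + c != 0 by rewrite gt_eqF // addr_gt0.
have sKs : dot (s *: v) (K *m (s *: v)) <= s * dot v v.
  have -> : dot (s *: v) (K *m (s *: v)) = s ^+ 2 * (dot v (D *m v) + c * dot v v).
    by rewrite /K; dot_expand; ring.
  have -> : s * dot v v = s ^+ 2 * ((M + c) * dot v v) by rewrite /s; field.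
  by apply: ler_wpM2l; [exact: sqr_ge0 | have := DM v; lra].
have sKi : s * dot v v <= dot v (invmx K *m v).
  by move: (dot_invmx_ge v (s *: v) sK pK) sKs; rewrite dotZl; lra.
have -> : c * M / (M + c) * dot v v = c * dot v v - c ^+ 2 * (s * dot v v).
  by rewrite /s; field.
rewrite /forgetmx mulmxBl !mulmxZl mul1mx dotBr !dotZr lerD2l lerN2.
by apply: ler_wpM2l; [exact: sqr_ge0 | exact: sKi].
Qed.

End ForgettingMap.

Section LogDeterminant.
Variable R : realType.

Lemma ln_prod1D_le_sum n (f : 'I_n -> R) : (forall i, 0 <= f i) ->
  ln (\prod_i (1 + f i)) <= \sum_i f i.
Proof.
move=> f_ge0; have : 0 < \prod_i (1 + f i) <= expR (\sum_i f i).
  apply: (big_ind2 (fun p s => 0 < p <= expR s)); first by rewrite expR0 ltr01 lexx.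
    move=> p1 p2 s1 s2 /andP[p1_gt0 p1s1] /andP[p2_gt0 p2s2].
    by rewrite expRD mulr_gt0 //= ler_pM // ltW.
  by move=> i _; rewrite expR_ge1Dx andbT; have := f_ge0 i; lra.
by case/andP => p_gt0 ple; rewrite -[X in _ <= X]expRK ler_ln ?posrE ?expR_gt0.
Qed.

Lemma dot_invmx_rank1_le_ln_det n (A : 'M[R]_n) (a : 'cV[R]_n) :
  symmx A -> posdefmx A -> symmx (A + a *m a^T) -> posdefmx (A + a *m a^T) ->
  dot a (invmx (A + a *m a^T) *m a) <= ln (\det (A + a *m a^T)) - ln (\det A).
Proof.
move=> sA pA sAa pAa; have detA_gt0 := det_posdefmx_gt0 sA pA.
have detAa_gt0 := det_posdefmx_gt0 sAa pAa.
have := det_rank1_update (posdefmx_unit sAa pAa); set q := dot _ _ => detAE.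
have q_lt1 : 0 < 1 - q by move: detA_gt0; rewrite detAE pmulr_rgt0.
rewrite detAE lnM ?posrE //; have := @le_ln1Dx R (- q); rewrite -/(1 - q); lra.
Qed.

(* Hadamard's inequality for [1 + c^-1 D], then [ln (1 + t) <= t] on its diagonal. *)
Lemma ln_det_forgetmx_le n (c : R) (D : 'M[R]_n) : 0 < c -> symmx D -> posdefmx D ->
  ln (\det D) - ln (\det (forgetmx c D)) <= c^-1 * \tr D.
Proof.
move=> c_gt0 sD pD; set N := 1%:M + c^-1 *: D.
have sN : symmx N by rewrite /symmx linearD /= linearZ /= sD tr_scalar_mx.
have pN : posdefmx N.
  move=> v v_neq0; rewrite mulmxDl mul1mx mulmxZl dotDr dotZr.
  apply: ltr_pwDl; first exact: dot_gt0.
  by apply: mulr_ge0; [rewrite invr_ge0 ltW | exact: posdefmx_ge0].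
have [detN_gt0 detN_le] := hadamard sN pN.
have detF_gt0 := det_posdefmx_gt0 (forgetmx_sym c sD) (forgetmx_posdef c_gt0 sD pD).
rewrite -{1}(mul_shrink_forgetmx c_gt0 sD pD) -/N det_mulmx lnM ?posrE // addrK.
apply: (le_trans (y := ln (\prod_i N i i))).
  by rewrite ler_ln ?posrE // (lt_le_trans detN_gt0).
have -> : \prod_i N i i = \prod_i (1 + c^-1 * D i i).
  by apply: eq_bigr => i _; rewrite !mxE eqxx mulr1n.
rewrite /mxtrace mulr_sumr; apply: ln_prod1D_le_sum => i.
by apply: mulr_ge0; [rewrite invr_ge0 ltW | exact: posdefmx_diag_ge0].
Qed.

End LogDeterminant.

Lemma loewner_bound_stable (R : rcfType) (c X M : R) : 0 < c -> 0 < X ->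
  (3 * X ^+ 2 + Num.sqrt (X ^+ 4 + 4 * X ^+ 2 * c)) / 2 <= M ->
  c * M / (M + c) + X ^+ 2 <= M.
Proof.
move=> c_gt0 X_gt0 M_ge; set s := Num.sqrt _ in M_ge.
have s_ge0 : 0 <= s by exact: sqrtr_ge0.
have X2_gt0 : 0 < X ^+ 2 by exact: exprn_gt0.
have sE : s ^+ 2 = X ^+ 4 + 4 * X ^+ 2 * c by rewrite sqr_sqrtr //; nra.
have M_gt0 : 0 < M by lra.
have Mc_gt0 : 0 < M + c by exact: addr_gt0.
(* [M] lies above the larger root of [t^2 - X^2 t - X^2 c]. *)
have root_ge0 : 0 <= M ^+ 2 - X ^+ 2 * M - X ^+ 2 * c.
  have -> : M ^+ 2 - X ^+ 2 * M - X ^+ 2 * c =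
      (M - (X ^+ 2 + s) / 2) * (M - (X ^+ 2 - s) / 2).
    have -> : X ^+ 2 * c = (s ^+ 2 - X ^+ 4) / 4 by rewrite sE; field.
    by field.
  by apply: mulr_ge0; lra.
rewrite -subr_ge0; have -> : M - (c * M / (M + c) + X ^+ 2) =
    (M ^+ 2 - X ^+ 2 * M - X ^+ 2 * c) / (M + c).
  by field; rewrite gt_eqF.
exact: divr_ge0 root_ge0 (ltW Mc_gt0).
Qed.

Lemma sqnorm2E (R : realType) d (v : 'cV[R]_d) : sqnorm2 v = dot v v.
Proof. by apply: eq_bigr => i _; rewrite expr2. Qed.

Section LaserAnalysis.
Variables (R : realType) (d : nat) (b c : R) (x : nat -> 'cV[R]_d) (y : nat -> R).
Hypotheses (b_gt0 : 0 < b) (b_lt_c : b < c).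

Let c_gt0 : 0 < c. Proof. exact: lt_trans b_lt_c. Qed.
Let D0_gt0 : 0 < b * c / (c - b). Proof. by rewrite divr_gt0 ?mulr_gt0 ?subr_gt0. Qed.
Let Dt t := laserD b c x y t.
Let et t := lasere b c x y t.
Let Ft t := forgetmx c (Dt t).
Let mt t := invmx (Dt t) *m et t.

Lemma laserD_S t : Dt t.+1 = invmx (invmx (Dt t) + c^-1%:M) + x t.+1 *m (x t.+1)^T.
Proof. by rewrite /Dt /laserD /=; case: laser_state. Qed.

Lemma lasere_S t : et t.+1 = shrink c (Dt t) *m et t + y t.+1 *: x t.+1.
Proof. by rewrite /et /Dt /lasere /laserD /=; case: laser_state. Qed.

Lemma laserD_spd t : symmx (Dt t) /\ posdefmx (Dt t).
Proof.
elim: t => [|t [sD pD]].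
  split; first by rewrite /symmx tr_scalar_mx.
  by move=> v v_neq0; rewrite mul_scalar_mx dotZr mulr_gt0 ?dot_gt0.
rewrite laserD_S invmx_inv_addc //; split.
  by rewrite /symmx linearD /= trmx_mul trmxK (forgetmx_sym c sD).
move=> v v_neq0; rewrite mulmxDl mul_rank1mx dotDr dotZr (dotC v (x t.+1)).
by apply: ltr_pwDl; [exact: forgetmx_posdef | exact: sqr_ge0].
Qed.

Let sDt t : symmx (Dt t). Proof. by case: (laserD_spd t). Qed.
Let pDt t : posdefmx (Dt t). Proof. by case: (laserD_spd t). Qed.
Let sFt t : symmx (Ft t). Proof. exact: forgetmx_sym. Qed.
Let pFt t : posdefmx (Ft t). Proof. exact: forgetmx_posdef. Qed.

Lemma laserD_forget t : Dt t.+1 = Ft t + x t.+1 *m (x t.+1)^T.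
Proof. by rewrite laserD_S invmx_inv_addc. Qed.

Lemma lasere_forget t : et t.+1 = Ft t *m mt t + y t.+1 *: x t.+1.
Proof. by rewrite lasere_S /shrink shrink_forgetmx // mulmxA. Qed.

Lemma laser_predE t :
  laser_pred b c x y t.+1 = dot (x t.+1) (invmx (Dt t.+1) *m (Ft t *m mt t)).
Proof.
rewrite /laser_pred /= -dot_trmx_mul -!mulmxA /shrink shrink_forgetmx //.
by rewrite !mulmxA.
Qed.

Lemma laser_forget0 : Ft 0 = b%:M.
Proof.
rewrite /Ft /forgetmx /Dt /laserD /= /D0 -raddfD /= invmx_scalar.
rewrite !scale_scalar_mx -(raddfB (@scalar_mx R d)); congr (_%:M).
have cb_neq0 : c - b != 0 by rewrite gt_eqF // subr_gt0.
have -> : b * c / (c - b) + c = c ^+ 2 / (c - b) by field.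
by field; rewrite cb_neq0 gt_eqF // exprn_gt0.
Qed.

Lemma laser_mean0 : mt 0 = 0.
Proof. by rewrite /mt /et /lasere /= mulmx0. Qed.

Fixpoint minloss t := if t is t'.+1 then
  minloss t' + dot (mt t') (Ft t' *m mt t') + y t'.+1 ^+ 2
    - dot (et t'.+1) (invmx (Dt t'.+1) *m et t'.+1) else 0.

(* [regloss t w] is the least regularised loss of a comparator path ending at [w]
   at time [t]: a quadratic with Hessian [Dt t], minimiser [mt t], minimum [minloss t]. *)
Let regloss t w := dot (w - mt t) (Dt t *m (w - mt t)) + minloss t.

Lemma laser_pred_loss_le t : (y t.+1 - laser_pred b c x y t.+1) ^+ 2 <=
  minloss t.+1 - minloss t + y t.+1 ^+ 2 * dot (x t.+1) (invmx (Dt t.+1) *m x t.+1).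
Proof.
have := rank1_update_pred (sFt t) _ _ (pFt t) (lasere_forget t).
rewrite -laserD_forget => /(_ (sDt _) (posdefmx_unit (sDt _) (pDt _))).
by rewrite laser_predE /=; lra.
Qed.

Lemma regloss_S t w : regloss t.+1 w =
  dot (w - mt t) (Ft t *m (w - mt t)) + minloss t + (y t.+1 - dot (x t.+1) w) ^+ 2.
Proof.
have := rank1_update_quad (sFt t) _ _ w (lasere_forget t).
rewrite -laserD_forget => /(_ (sDt _) (posdefmx_unit (sDt _) (pDt _))) quadE.
by rewrite /regloss /=; lra.
Qed.

Lemma regloss_S_le t w z : regloss t.+1 w <=
  regloss t z + c * dot (z - w) (z - w) + (y t.+1 - dot (x t.+1) w) ^+ 2.
Proof.
have := forgetmx_infconv c_gt0 (sDt t) (pDt t) (z - mt t) (w - mt t).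
rewrite (_ : z - mt t - (w - mt t) = z - w); last by rewrite opprB addrA subrK.
rewrite regloss_S /regloss -/(Ft t); lra.
Qed.

Lemma regloss1 w : regloss 1 w = b * dot w w + (y 1 - dot (x 1) w) ^+ 2.
Proof.
by rewrite regloss_S laser_forget0 laser_mean0 subr0 mul_scalar_mx dotZr addr0.
Qed.

Lemma regloss_path_le (u : nat -> 'cV[R]_d) n : regloss n.+1 (u n.+1) <=
  b * dot (u 1%N) (u 1%N) + \sum_(i < n.+1) (y i.+1 - dot (x i.+1) (u i.+1)) ^+ 2
  + c * \sum_(i < n) dot (u i.+1 - u i.+2) (u i.+1 - u i.+2).
Proof.
elim: n => [|n IH]; first by rewrite regloss1 big_ord1 big_ord0 mulr0 addr0.
apply: le_trans (regloss_S_le _ _ (u n.+1)) _.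
rewrite big_ord_recr [X in _ <= _ + _ + c * X]big_ord_recr /=; nra.
Qed.

Lemma minloss_le_regloss t w : minloss t <= regloss t w.
Proof. by rewrite /regloss lerDr posdefmx_ge0. Qed.

Lemma laser_loss_le_sum (u : nat -> 'cV[R]_d) T : (1 <= T)%N ->
  laser_loss b c x y T <= b * sqnorm2 (u 1%N) + seq_loss x u y T
    + c * path_variation u T
    + \sum_(i < T) y i.+1 ^+ 2 * dot (x i.+1) (invmx (Dt i.+1) *m x i.+1).
Proof.
case: T => // T _.
rewrite /laser_loss /seq_loss /path_variation !big_add1 /= !big_mkord sqnorm2E.
under [X in _ <= _ + X + _ + _]eq_bigr => i _ do
  rewrite dot_trmx_mul -sqrrN opprB.
under [X in _ <= _ + _ + c * X + _]eq_bigr => i _ do rewrite sqnorm2E.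
have telescope : \sum_(i < T.+1) (minloss i.+1 - minloss i) = minloss T.+1.
  rewrite -(big_mkord xpredT (fun i => minloss i.+1 - minloss i)).
  by rewrite telescope_sumr //= subr0.
have := minloss_le_regloss T.+1 (u T.+1); have := regloss_path_le u T.
suff : \sum_(i < T.+1) (y i.+1 - laser_pred b c x y i.+1) ^+ 2 <= minloss T.+1 +
    \sum_(i < T.+1) y i.+1 ^+ 2 * dot (x i.+1) (invmx (Dt i.+1) *m x i.+1) by lra.
by rewrite -telescope -big_split; apply: ler_sum => i _; exact: laser_pred_loss_le.
Qed.

Lemma laser_dot_invmx_le_ln_det t :
  dot (x t.+1) (invmx (Dt t.+1) *m x t.+1) <= ln (\det (Dt t.+1)) - ln (\det (Ft t)).
Proof.
by rewrite laserD_forget; apply: dot_invmx_rank1_le_ln_det; rewrite // -laserD_forget.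
Qed.

Lemma sum_laser_dot_invmx_le T : (1 <= T)%N ->
  \sum_(i < T) dot (x i.+1) (invmx (Dt i.+1) *m x i.+1) <=
  ln (\det (b^-1 *: Dt T)) + c^-1 * \sum_(i < T.-1) \tr (Dt i.+1).
Proof.
case: T => // T _ /=.
apply: (le_trans (y := \sum_(i < T.+1) (ln (\det (Dt i.+1)) - ln (\det (Ft i))))).
  by apply: ler_sum => i _; exact: laser_dot_invmx_le_ln_det.
rewrite sumrB big_ord_recr big_ord_recl /= laser_forget0.
have detDT_gt0 := det_posdefmx_gt0 (sDt T.+1) (pDt T.+1).
have -> : ln (\det (b^-1 *: Dt T.+1)) = ln (\det (Dt T.+1)) - ln (\det (b%:M : 'M[R]_d)).
  rewrite detZ det_scalar exprVn lnM ?posrE ?invr_gt0 ?exprn_gt0 //.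
  by rewrite lnV ?posrE ?exprn_gt0 // addrC.
suff : \sum_(i < T) ln (\det (Dt i.+1)) - \sum_(i < T) ln (\det (Ft (bump 0 i))) <=
    c^-1 * \sum_(i < T) \tr (Dt i.+1) by lra.
rewrite -sumrB mulr_sumr; apply: ler_sum => i _.
exact: ln_det_forgetmx_le.
Qed.

Lemma laserD_le (X : R) T : 0 < X ->
  (forall t, (1 <= t <= T)%N -> sqnorm2 (x t) <= X ^+ 2) ->
  let M := Num.max ((3 * X ^+ 2 + Num.sqrt (X ^+ 4 + 4 * X ^+ 2 * c)) / 2) (b + X ^+ 2) in
  forall t, (t.+1 <= T)%N -> forall v, dot v (Dt t.+1 *m v) <= M * dot v v.
Proof.
move=> X_gt0 xX M.
have M_ge1 : (3 * X ^+ 2 + Num.sqrt (X ^+ 4 + 4 * X ^+ 2 * c)) / 2 <= M.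
  by rewrite le_max lexx.
have M_ge2 : b + X ^+ 2 <= M by rewrite le_max lexx orbT.
have M_gt0 : 0 < M by apply: lt_le_trans M_ge2; rewrite addr_gt0 ?exprn_gt0.
have rank1_le t v : (t.+1 <= T)%N ->
    dot v ((x t.+1 *m (x t.+1)^T) *m v) <= X ^+ 2 * dot v v.
  move=> tT; rewrite mul_rank1mx dotZr (dotC v) -expr2.
  apply: le_trans (cauchy_schwarz _ _) _; apply: ler_wpM2r; first exact: dot_ge0.
  by rewrite -sqnorm2E; apply: xX.
clearbody M; elim=> [|t IH] tT v; rewrite laserD_forget mulmxDl dotDr.
  rewrite laser_forget0 mul_scalar_mx dotZr.
  by have := rank1_le 0%N v tT; have := dot_ge0 v; nra.
have := forgetmx_le c_gt0 (sDt _) (pDt _) M_gt0 (IH (ltnW tT)) v.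
have := rank1_le t.+1 v tT; have := loewner_bound_stable c_gt0 X_gt0 M_ge1.
by have := dot_ge0 v; rewrite -/(Ft t.+1); nra.
Qed.

Lemma laser_regret_bound (T : nat) (X Y : R) (u : nat -> 'cV[R]_d) :
  (1 <= T)%N -> 0 < X -> 0 <= Y ->
  (forall t, (1 <= t <= T)%N -> sqnorm2 (x t) <= X ^+ 2) ->
  (forall t, (1 <= t <= T)%N -> `|y t| <= Y) ->
  laser_loss b c x y T <= b * sqnorm2 (u 1%N) + seq_loss x u y T
    + Y ^+ 2 * ln (\det (b^-1 *: laserD b c x y T))
    + c^-1 * Y ^+ 2 * \tr (D0 d b c) + c * path_variation u T
    + c^-1 * Y ^+ 2 * T%:R * d%:R *
      Num.max ((3 * X ^+ 2 + Num.sqrt (X ^+ 4 + 4 * X ^+ 2 * c)) / 2) (b + X ^+ 2).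
Proof.
move=> T_ge1 X_gt0 Y_ge0 xX yY; have := laser_loss_le_sum u T_ge1.
have := sum_laser_dot_invmx_le T_ge1; have DM := laserD_le X_gt0 xX.
set M := Num.max _ _ in DM *; set Q := \sum_(i < T) dot _ _.
have M_ge0 : 0 <= M by rewrite le_max addr_ge0 ?orbT ?sqr_ge0 // ltW.
have c_inv_ge0 : 0 <= c^-1 by rewrite invr_ge0 ltW.
have yQ : \sum_(i < T) y i.+1 ^+ 2 * dot (x i.+1) (invmx (Dt i.+1) *m x i.+1)
    <= Y ^+ 2 * Q.
  rewrite /Q mulr_sumr; apply: ler_sum => i _.
  apply: ler_wpM2r; first exact: invmx_posdefmx_ge0.
  by have := yY i.+1 (ltn_ord i); rewrite ler_norml => /andP[? ?]; nra.
have trM : \sum_(i < T.-1) \tr (Dt i.+1) <= T%:R * d%:R * M.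
  apply: le_trans (_ : \sum_(i < T.-1) M * d%:R <= _).
    apply: ler_sum => i _; apply: mxtrace_le; apply: DM.
    by rewrite (leq_trans (ltn_ord i)) ?leq_pred.
  rewrite sumr_const card_ord -[_ *+ T.-1]mulr_natr.
  rewrite (_ : _ * M = M * d%:R * T%:R); last by ring.
  by apply: ler_wpM2l; rewrite ?mulr_ge0 // ler_nat leq_pred.
have tr0_ge0 : 0 <= \tr (D0 d b c).
  by rewrite mxtrace_scalar mulrn_wge0 // ltW.
set Tr := \sum_(i < T.-1) _ in trM *; move=> QLn.
have cY_ge0 : 0 <= c^-1 * Y ^+ 2 by rewrite mulr_ge0 ?sqr_ge0.
have := ler_wpM2l (sqr_ge0 Y) QLn; rewrite mulrDr mulrCA mulrA => YQ.
have := ler_wpM2l cY_ge0 trM; rewrite !mulrA -/(Dt T) => cYTr.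
have := mulr_ge0 cY_ge0 tr0_ge0; lra.
Qed.

End LaserAnalysis.

Lemma max_loewner_le_sqrt (R : rcfType) (b c X : R) : 0 <= b -> 0 < X ->
  9 / 8 * X ^+ 2 <= c -> (b + X ^+ 2) ^+ 2 / (8 * X ^+ 2) <= c ->
  Num.max ((3 * X ^+ 2 + Num.sqrt (X ^+ 4 + 4 * X ^+ 2 * c)) / 2) (b + X ^+ 2)
    <= 2 * Num.sqrt (2 * X ^+ 2 * c).
Proof.
move=> b_ge0 X_gt0 c_ge1 c_ge2; have X2_gt0 : 0 < X ^+ 2 by exact: exprn_gt0.
have X2_ge0 := ltW X2_gt0.
have c_gt0 : 0 < c by apply: lt_le_trans c_ge1; rewrite mulr_gt0.
set w := Num.sqrt (2 * X ^+ 2 * c); have w_ge0 : 0 <= w by exact: sqrtr_ge0.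
have wE : w ^+ 2 = 2 * X ^+ 2 * c by rewrite sqr_sqrtr //; nra.
rewrite ge_max; apply/andP; split.
  set s := Num.sqrt _; have s_ge0 : 0 <= s by exact: sqrtr_ge0.
  have sE : s ^+ 2 = X ^+ 4 + 4 * X ^+ 2 * c by rewrite sqr_sqrtr //; nra.
  have X_le_w : 3 / 2 * X ^+ 2 <= w.
    have X2_ge0' : 0 <= 3 / 2 * X ^+ 2 by rewrite mulr_ge0.
    rewrite -ler_sqr ?nnegrE // wE.
    by have := ler_wpM2l X2_ge0 c_ge1; nra.
  suff : s <= 4 * w - 3 * X ^+ 2 by lra.
  rewrite -ler_sqr ?nnegrE //; last by lra.
  have : 0 <= (w - 3 / 2 * X ^+ 2) * (7 * w - 3 / 2 * X ^+ 2) by apply: mulr_ge0; lra.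
  by rewrite sE; nra.
have bX_ge0 : 0 <= b + X ^+ 2 by rewrite addr_ge0.
rewrite -ler_sqr ?nnegrE ?mulr_ge0 // exprMn wE.
by move: c_ge2; rewrite ler_pdivrMr ?mulr_gt0 //; nra.
Qed.

Lemma powR32 (R : realType) (a : R) : 0 <= a -> a `^ (3 / 2) = a * Num.sqrt a.
Proof.
move=> a_ge0; rewrite (_ : 3 / 2 = 1 + 2^-1); last by field.
have h : (1 + 2^-1 : R) != 0 by rewrite gt_eqF // addr_gt0.
by rewrite powRD ?(negbTE h) // powRr1 // powR12_sqrt.
Qed.

Lemma mxtrace_D0_scaled (R : realType) (d : nat) (eps c : R) : 0 < c -> eps < 1 ->
  c^-1 * \tr (D0 d (eps * c) c) = eps / (1 - eps) * d%:R.
Proof.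
move=> c_gt0 eps_lt1; have eps1_neq0 : 1 - eps != 0 by rewrite subr_eq0 gt_eqF.
rewrite /D0 mxtrace_scalar -mulr_natr (_ : c - eps * c = c * (1 - eps)); last by ring.
by field; rewrite eps1_neq0 gt_eqF.
Qed.

Section Tuning.
Variables (R : realType) (d T : nat) (c X Y V : R).
Let G := Num.sqrt 2 * Y ^+ 2 * d%:R * X.
Let Z := Num.sqrt 2 * T%:R * Y ^+ 2 * d%:R * X.
Hypotheses (X_gt0 : 0 < X) (V_gt0 : 0 < V) (c_gt0 : 0 < c) (cE : c = (Z / V) `^ (2 / 3)).

Let G_ge0 : 0 <= G.
Proof.
apply: mulr_ge0 (ltW X_gt0); apply: mulr_ge0 (ler0n _ _).
exact: mulr_ge0 (sqrtr_ge0 _) (sqr_ge0 _).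
Qed.

Let Z_ge0 : 0 <= Z.
Proof.
apply: mulr_ge0 (ltW X_gt0); apply: mulr_ge0 (ler0n _ _).
exact: mulr_ge0 (mulr_ge0 (sqrtr_ge0 _) (ler0n _ _)) (sqr_ge0 _).
Qed.
Let ZV_ge0 : 0 <= Z / V. Proof. exact: divr_ge0 Z_ge0 (ltW V_gt0). Qed.

Lemma tuned_c_sqrt : c * Num.sqrt c = Z / V.
Proof.
have h : 2 / 3 * (3 / 2) = 1 :> R by field.
by rewrite -powR32 ?(ltW c_gt0) // cE -powRrM h powRr1.
Qed.

Lemma tuned_le_c (mu : R) : 0 < mu -> V <= T%:R * G / mu `^ (3 / 2) -> mu <= c.
Proof.
move=> mu_gt0; have mu32_gt0 : 0 < mu `^ (3 / 2) := powR_gt0 _ mu_gt0.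
have TGE : T%:R * G = Z by rewrite /G /Z; ring.
rewrite ler_pdivlMr // mulrC -ler_pdivlMr // TGE.
move=> mu32_le; have : (mu `^ (3 / 2)) `^ (2 / 3) <= (Z / V) `^ (2 / 3).
  by apply: ge0_ler_powR; rewrite ?nnegrE ?powR_ge0 // divr_ge0.
have h : 3 / 2 * (2 / 3) = 1 :> R by field.
by rewrite -powRrM h (powRr1 (ltW mu_gt0)) -cE.
Qed.

Lemma tuned_variance_le (M : R) : M <= 2 * Num.sqrt (2 * X ^+ 2 * c) ->
  c^-1 * Y ^+ 2 * T%:R * d%:R * M <= 2 * (c * V).
Proof.
move=> M_le; have coef_ge0 : 0 <= c^-1 * Y ^+ 2 * T%:R * d%:R.
  apply: mulr_ge0 (ler0n _ _); apply: mulr_ge0 (ler0n _ _).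
  by rewrite mulr_ge0 ?sqr_ge0 // invr_ge0 ltW.
apply: le_trans (ler_wpM2l coef_ge0 M_le) _.
have ZE : Z = c * Num.sqrt c * V by rewrite tuned_c_sqrt; field; rewrite gt_eqF.
have X2_ge0 : 0 <= 2 * X ^+ 2 by rewrite mulr_ge0 ?sqr_ge0.
rewrite (sqrtrM _ X2_ge0) sqrtrM // sqrtr_sqr gtr0_norm //.
have -> : c^-1 * Y ^+ 2 * T%:R * d%:R * (2 * (Num.sqrt 2 * X * Num.sqrt c)) =
    2 * Z * Num.sqrt c / c by rewrite /Z; field; rewrite gt_eqF.
rewrite ZE; set q := Num.sqrt c; have q_gt0 : 0 < q by rewrite sqrtr_gt0.
rewrite -(sqr_sqrtr (ltW c_gt0)) -/q le_eqVlt; apply/orP; left; apply/eqP.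
by field; rewrite gt_eqF.
Qed.

Lemma tuned_cV : G `^ (2 / 3) * T%:R `^ (2 / 3) * V `^ (1 / 3) = c * V.
Proof.
have GT : G * T%:R = Z / V * V by rewrite /G /Z; field; rewrite gt_eqF.
rewrite -(powRM _ G_ge0 (ler0n _ _)) GT (powRM _ ZV_ge0 (ltW V_gt0)) -cE -mulrA.
rewrite -powRD; last by rewrite implybE gt_eqF ?orbT.
have h : 2 / 3 + 1 / 3 = 1 :> R by field.
by rewrite h powRr1 // ltW.
Qed.

End Tuning.

Theorem corollary8 (R : realType) (d T : nat) (b c X Y : R)
  (x : nat -> 'cV[R]_d) (y : nat -> R) :
  (1 <= d)%N -> (1 <= T)%N -> 0 < b -> b < c -> 0 < X -> 0 <= Y ->
  (forall t, (1 <= t <= T)%N -> sqnorm2 (x t) <= X ^+ 2) ->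
  (forall t, (1 <= t <= T)%N -> `|y t| <= Y) ->
  forall u : nat -> 'cV[R]_d,
  let V := path_variation u T in
  let LL := laser_loss b c x y T in
  let Lu := seq_loss x u y T in
  let logdet := ln (\det (b^-1 *: laserD b c x y T)) in
  (LL <= b * sqnorm2 (u 1%N) + Lu + Y ^+ 2 * logdet
         + c^-1 * Y ^+ 2 * \tr (D0 d b c) + c * V
         + c^-1 * Y ^+ 2 * T%:R * d%:R *
           Num.max ((3 * X ^+ 2 + Num.sqrt (X ^+ 4 + 4 * X ^+ 2 * c)) / 2)
                   (b + X ^+ 2))
  /\
  (forall eps : R, 0 < eps -> eps < 1 -> b = eps * c ->
   let mu := Num.max (9 / 8 * X ^+ 2) ((b + X ^+ 2) ^+ 2 / (8 * X ^+ 2)) in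
   0 < V ->
   V <= T%:R * (Num.sqrt 2 * Y ^+ 2 * d%:R * X) / powR mu (3 / 2) ->
   c = powR (Num.sqrt 2 * T%:R * Y ^+ 2 * d%:R * X / V) (2 / 3) ->
   LL <= b * sqnorm2 (u 1%N)
         + 3 * powR (Num.sqrt 2 * Y ^+ 2 * d%:R * X) (2 / 3)
             * powR T%:R (2 / 3) * powR V (1 / 3)
         + eps / (1 - eps) * Y ^+ 2 * d%:R + Lu + Y ^+ 2 * logdet).
Proof.
move=> _ T_ge1 b_gt0 b_lt_c X_gt0 Y_ge0 xX yY u V LL Lu logdet.
have bound := laser_regret_bound b_gt0 b_lt_c u T_ge1 X_gt0 Y_ge0 xX yY.
split; first exact: bound.
move=> eps _ eps_lt1 bE mu V_gt0 V_le cE; have c_gt0 := lt_trans b_gt0 b_lt_c.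
have mu_gt0 : 0 < mu by rewrite lt_max mulr_gt0 ?exprn_gt0.
have mu_le_c := tuned_le_c X_gt0 V_gt0 cE mu_gt0 V_le.
have c_ge1 : 9 / 8 * X ^+ 2 <= c by apply: le_trans mu_le_c; rewrite le_max lexx.
have c_ge2 : (b + X ^+ 2) ^+ 2 / (8 * X ^+ 2) <= c.
  by apply: le_trans mu_le_c; rewrite le_max lexx orbT.
have := tuned_variance_le X_gt0 V_gt0 c_gt0 cE
  (max_loewner_le_sqrt (ltW b_gt0) X_gt0 c_ge1 c_ge2).
have trE : c^-1 * Y ^+ 2 * \tr (D0 d b c) = eps / (1 - eps) * Y ^+ 2 * d%:R.
  by rewrite mulrAC bE mxtrace_D0_scaled // mulrAC.
move: bound; rewrite /LL /Lu /logdet trE -(tuned_cV X_gt0 V_gt0 cE); lra.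
Qed.
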